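(* Assume that $(\mathcal{H}_T)$, $(\mathcal{H}_\varphi)$, $(\mathcal{H}_K)$ and $(\mathcal{H}_0)$ hold and $m\in V^*$. Fix $a\in A$ and define the variational selection $S_a\colon C\to 2^C$ by letting $S_a(w)$ be the set of all $u\in K(w)$ such that $\langle T(a,u),v-u\rangle+\varphi(v)-\varphi(u)\ge\langle m,v-u\rangle$ for all $v\in K(w)$. Then the graph of $S_a$ is sequentially weakly closed: if $\{w_n\},\{u_n\}\subset C$, $u_n\in S_a(w_n)$, $w_n\rightharpoonup w$ and $u_n\rightharpoonup u$ weakly in $V$, then $u\in S_a(w)$. Moreover, the set $S_a(C)=\bigcup_{w\in C}S_a(w)$ is bounded in $V$.
   Context: Let $V$ be a real reflexive Banach space with dual $V^*$ and duality pairing $\langle\cdot,\cdot\rangle$, let $C\subseteq V$ be nonempty, closed and convex, let $B$ be a real Banach space and $A\subseteq B$ a nonempty set of parameters, and let $T\colon B\times V\to V^*$, $\varphi\colon V\to\mathbb{R}\cup\{+\infty\}$, $K\colon C\to 2^C$, $m\in V^*$ be given. Hypothesis $(\mathcal{H}_T)$: $T$ is bounded (maps bounded sets to bounded sets); for each $u\in V$ the map $T(\cdot,u)\colon B\to V^*$ is linear; for each $a\in A$ the map $T(a,\cdot)\colon V\to V^*$ is monotone and continuous. Hypothesis $(\mathcal{H}_\varphi)$: $\varphi$ is proper, convex and lower semicontinuous, and $C\subseteq\operatorname{int}(\operatorname{dom}\varphi)$. Hypothesis $(\mathcal{H}_K)$: for every $u\in C$ the set $K(u)\subseteq C$ is nonempty,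 closed and convex, and (i) for any sequence $\{x_n\}\subset C$ with $x_n\rightharpoonup x$ weakly and any $y\in K(x)$ there is a sequence $\{y_n\}\subset C$ with $y_n\in K(x_n)$ and $y_n\to y$ strongly; (ii) for any sequences $\{x_n\},\{y_n\}\subset C$ with $y_n\in K(x_n)$, $x_n\rightharpoonup x$ and $y_n\rightharpoonup y$, one has $y\in K(x)$. Hypothesis $(\mathcal{H}_0)$: there is a bounded set $C_0\subseteq V$ with $K(u)\cap C_0\neq\emptyset$ for every $u\in C$, and a function $h\colon[0,\infty)\to\mathbb{R}$ with $h(t)\to+\infty$ as $t\to+\infty$ such that $\langle T(a,w),w-v_0\rangle+\varphi(w)-\varphi(v_0)\ge h(\|w\|_V)\|w\|_V$ for all $v_0\in C_0$, $a\in A$, $w\in C$. *)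

From Stdlib Require Import Reals.
Open Scope R_scope.

Record NormedSpace := mkNS {
  ns_car :> Type;
  ns_zero : ns_car;
  ns_add : ns_car -> ns_car -> ns_car;
  ns_opp : ns_car -> ns_car;
  ns_scal : R -> ns_car -> ns_car;
  ns_norm : ns_car -> R;
  ns_addA : forall x y z, ns_add x (ns_add y z) = ns_add (ns_add x y) z;
  ns_addC : forall x y, ns_add x y = ns_add y x;
  ns_add0 : forall x, ns_add ns_zero x = x;
  ns_addN : forall x, ns_add x (ns_opp x) = ns_zero;
  ns_scalA : forall a b x, ns_scal a (ns_scal b x) = ns_scal (a * b) x;
  ns_scal1 : forall x, ns_scal 1 x = x;
  ns_scalDr : forall a x y, ns_scal a (ns_add x y) = ns_add (ns_scal a x) (ns_scal a y);
  ns_scalDl : forall a b x, ns_scal (a + b) x = ns_add (ns_scal a x) (ns_scal b x);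
  ns_norm_eq0 : forall x, ns_norm x = 0 -> x = ns_zero;
  ns_normZ : forall a x, ns_norm (ns_scal a x) = Rabs a * ns_norm x;
  ns_normD : forall x y, ns_norm (ns_add x y) <= ns_norm x + ns_norm y
}.

Arguments ns_zero {_}.
Arguments ns_add {_}.
Arguments ns_opp {_}.
Arguments ns_scal {_}.
Arguments ns_norm {_}.

Definition ns_sub {V : NormedSpace} (x y : V) : V := ns_add x (ns_opp y).

Definition norm_cv {V : NormedSpace} (u : nat -> V) (x : V) : Prop :=
  Un_cv (fun n => ns_norm (ns_sub (u n) x)) 0.

Definition ns_complete (V : NormedSpace) : Prop :=
  forall u : nat -> V,
    (forall eps, eps > 0 -> exists N, forall n m, (n >= N)%nat -> (m >= N)%nat ->
        ns_norm (ns_sub (u n) (u m)) < eps) ->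
    exists x, norm_cv u x.

Definition is_linear {V : NormedSpace} (f : V -> R) : Prop :=
  (forall x y, f (ns_add x y) = f x + f y) /\ (forall c x, f (ns_scal c x) = c * f x).

Definition dual_bound {V : NormedSpace} (f : V -> R) (c : R) : Prop :=
  forall x, Rabs (f x) <= c * ns_norm x.

(** f is an element of V^* (bounded = continuous linear functional). *)
Definition in_dual {V : NormedSpace} (f : V -> R) : Prop :=
  is_linear f /\ exists M, dual_bound f M.

(** Bounded linear functionals on V^* (elements of V^** ). *)
Definition in_bidual {V : NormedSpace} (Phi : (V -> R) -> R) : Prop :=
  (forall f g, (forall x, f x = g x) -> Phi f = Phi g) /\
  (forall f g, in_dual f -> in_dual g -> Phi (fun x => f x + g x) = Phi f + Phi g) /\
  (forall c f, in_dual f -> Phi (fun x => c * f x) = c * Phi f) /\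
  (exists M, forall f c, in_dual f -> dual_bound f c -> Rabs (Phi f) <= M * c).

Definition ns_reflexive (V : NormedSpace) : Prop :=
  forall Phi : (V -> R) -> R, in_bidual Phi ->
    exists x : V, forall f, in_dual f -> Phi f = f x.

Definition weak_cv {V : NormedSpace} (u : nat -> V) (x : V) : Prop :=
  forall f, in_dual f -> Un_cv (fun n => f (u n)) (f x).

Definition ns_convex_set {V : NormedSpace} (C : V -> Prop) : Prop :=
  forall x y t, 0 <= t <= 1 -> C x -> C y ->
    C (ns_add (ns_scal t x) (ns_scal (1 - t) y)).

Definition ns_closed_set {V : NormedSpace} (C : V -> Prop) : Prop :=
  forall (u : nat -> V) x, (forall n, C (u n)) -> norm_cv u x -> C x.

Definition ns_bounded_set {V : NormedSpace} (C : V -> Prop) : Prop :=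
  exists M, forall x, C x -> ns_norm x <= M.

Inductive ERbar := Fin (r : R) | PInf.

Definition ERle (x y : ERbar) : Prop :=
  match x, y with
  | _, PInf => True
  | PInf, Fin _ => False
  | Fin a, Fin b => a <= b
  end.

Definition proper_fun {V : NormedSpace} (phi : V -> ERbar) : Prop :=
  exists x, phi x <> PInf.

Definition convex_fun {V : NormedSpace} (phi : V -> ERbar) : Prop :=
  forall x y t, 0 < t < 1 ->
    match phi x, phi y with
    | Fin a, Fin b => ERle (phi (ns_add (ns_scal t x) (ns_scal (1 - t) y))) (Fin (t * a + (1 - t) * b))
    | _, _ => True
    end.

Definition lsc_fun {V : NormedSpace} (phi : V -> ERbar) : Prop :=
  forall (u : nat -> V) x c, norm_cv u x ->
    (forall n, ERle (phi (u n)) (Fin c)) -> ERle (phi x) (Fin c).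

Definition in_int_dom {V : NormedSpace} (phi : V -> ERbar) (C : V -> Prop) : Prop :=
  forall x, C x -> exists r, r > 0 /\
    forall y, ns_norm (ns_sub y x) < r -> phi y <> PInf.

(** Hypothesis (H_T). T : B × V -> V^*, T a u x = <T(a,u), x>. *)
Definition H_T {B V : NormedSpace} (A : B -> Prop) (T : B -> V -> V -> R) : Prop :=
  (forall a u, in_dual (T a u)) /\
  (forall M, exists N, forall a u, ns_norm a <= M -> ns_norm u <= M -> dual_bound (T a u) N) /\
  (forall a b u x, T (ns_add a b) u x = T a u x + T b u x) /\
  (forall c a u x, T (ns_scal c a) u x = c * T a u x) /\
  (forall a, A a -> forall u v, T a u (ns_sub u v) - T a v (ns_sub u v) >= 0) /\
  (forall a, A a -> forall (un : nat -> V) u, norm_cv un u ->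
     forall eps, eps > 0 -> exists N, forall n, (n >= N)%nat ->
       dual_bound (fun x => T a (un n) x - T a u x) eps).

Definition H_phi {V : NormedSpace} (phi : V -> ERbar) (C : V -> Prop) : Prop :=
  proper_fun phi /\ convex_fun phi /\ lsc_fun phi /\ in_int_dom phi C.

(** Hypothesis (H_K); [K x y] means y ∈ K(x). *)
Definition H_K {V : NormedSpace} (C : V -> Prop) (K : V -> V -> Prop) : Prop :=
  (forall u, C u ->
     (forall y, K u y -> C y) /\ (exists y, K u y) /\
     ns_closed_set (K u) /\ ns_convex_set (K u)) /\
  (forall (xn : nat -> V) x y, (forall n, C (xn n)) -> weak_cv xn x -> K x y ->
     exists yn : nat -> V, (forall n, C (yn n)) /\ (forall n, K (xn n) (yn n)) /\ norm_cv yn y) /\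
  (forall (xn yn : nat -> V) x y, (forall n, C (xn n)) -> (forall n, C (yn n)) ->
     (forall n, K (xn n) (yn n)) -> weak_cv xn x -> weak_cv yn y -> K x y).

Definition H_0 {B V : NormedSpace} (A : B -> Prop) (T : B -> V -> V -> R)
    (phi : V -> ERbar) (C : V -> Prop) (K : V -> V -> Prop) : Prop :=
  exists (C0 : V -> Prop) (h : R -> R),
    ns_bounded_set C0 /\
    (forall u, C u -> exists v, K u v /\ C0 v) /\
    (forall M, exists t0, forall t, t >= t0 -> h t >= M) /\
    (forall v0 a w, C0 v0 -> A a -> C w ->
       exists pw pv, phi w = Fin pw /\ phi v0 = Fin pv /\
         T a w (ns_sub w v0) + pw - pv >= h (ns_norm w) * ns_norm w).

(** Variational selection: [S_a T phi K m a w u] means u ∈ S_a(w). *)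
Definition S_a {B V : NormedSpace} (T : B -> V -> V -> R) (phi : V -> ERbar)
    (K : V -> V -> Prop) (m : V -> R) (a : B) (w u : V) : Prop :=
  K w u /\
  exists pu, phi u = Fin pu /\
  forall v, K w v ->
    match phi v with
    | Fin pv => T a u (ns_sub v u) + pv - pu >= m (ns_sub v u)
    | PInf => True
    end.

From mathcomp Require classical_sets boolp.
From Stdlib Require Import Reals Lra Lia List Classical ClassicalEpsilon.
Open Scope R_scope.

(** Boundedness of [S_a(C)] is a direct consequence
    of the coercivity hypothesis (H_0), tested at a point of [K(w) ∩ C0].
    For the closedness of the graph, let [u_n ∈ S_a(w_n)] with [w_n ⇀ w],
    [u_n ⇀ u].  Then [w ∈ C] (closed convex sets are weakly closed) and
    [u ∈ K(w)] by (H_K)(ii).  By monotonicity of [T(a,.)], the boundedness of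
    [(u_n)], strong recovery sequences [v_n → v] from (H_K)(i), upper semicontinuity of
    [phi] at [v] and weak lower semicontinuity of [phi] at [u], the limit [u]
    satisfies the Minty inequality on [K(w)]; hemicontinuity of [T(a,.)] along
    segments then turns it back into the variational inequality. *)

Section VectorAlgebra.
Context {V : NormedSpace}.
Implicit Types x y z : V.

Lemma ns_add0r x : ns_add x ns_zero = x.
Proof. rewrite ns_addC; apply ns_add0. Qed.

Lemma ns_addIl x y z : ns_add x y = ns_add x z -> y = z.
Proof.
  intro H. rewrite <- (ns_add0 V y), <- (ns_add0 V z), <- (ns_addN V x).
  rewrite (ns_addC V x (ns_opp x)), <- !ns_addA, H. reflexivity.
Qed.

Lemma ns_scal0 x : ns_scal 0 x = ns_zero.
Proof.
  apply (ns_addIl (ns_scal 0 x)). rewrite ns_add0r, <- ns_scalDl. f_equal; ring.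
Qed.

Lemma ns_scal_zero (c : R) : ns_scal c (@ns_zero V) = ns_zero.
Proof. rewrite <- (ns_scal0 ns_zero), ns_scalA, Rmult_0_r. reflexivity. Qed.

Lemma ns_opp_scal x : ns_opp x = ns_scal (-1) x.
Proof.
  apply (ns_addIl x). rewrite ns_addN.
  rewrite <- (ns_scal1 V x) at 1. rewrite <- ns_scalDl.
  replace (1 + -1) with 0 by ring. now rewrite ns_scal0.
Qed.

Lemma ns_norm_zero : ns_norm (@ns_zero V) = 0.
Proof. rewrite <- (ns_scal0 ns_zero), ns_normZ, Rabs_R0. ring. Qed.

Lemma ns_norm_opp x : ns_norm (ns_opp x) = ns_norm x.
Proof. rewrite ns_opp_scal, ns_normZ, Rabs_left by lra. ring. Qed.

Lemma ns_norm_ge0 x : 0 <= ns_norm x.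
Proof.
  pose proof (ns_normD V x (ns_opp x)) as H.
  rewrite ns_addN, ns_norm_zero, ns_norm_opp in H. lra.
Qed.

End VectorAlgebra.

(** A reflexive decision procedure for identities between linear
    combinations: a vector expression is interpreted in an environment
    of atoms and normalised to its coefficient on each atom. *)

Inductive vexpr :=
  | VAtom (n : nat) | VZero | VAdd (e1 e2 : vexpr) | VOpp (e : vexpr) | VScal (c : R) (e : vexpr).

Fixpoint vdenote {V : NormedSpace} (env : list V) (e : vexpr) : V :=
  match e with
  | VAtom n => nth n env ns_zero
  | VZero => ns_zero
  | VAdd e1 e2 => ns_add (vdenote env e1) (vdenote env e2)
  | VOpp e => ns_opp (vdenote env e)
  | VScal c e => ns_scal c (vdenote env e)
  end.

Fixpoint vcoef (e : vexpr) (i : nat) : R :=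
  match e with
  | VAtom n => if Nat.eqb n i then 1 else 0
  | VZero => 0
  | VAdd e1 e2 => vcoef e1 i + vcoef e2 i
  | VOpp e => - vcoef e i
  | VScal c e => c * vcoef e i
  end.

Fixpoint lin_comb {V : NormedSpace} (l : list V) (c : nat -> R) : V :=
  match l with
  | nil => ns_zero
  | x :: l => ns_add (ns_scal (c O) x) (lin_comb l (fun i => c (S i)))
  end.

Section LinComb.
Context {V : NormedSpace}.

Lemma lin_comb_ext (l : list V) c1 c2 :
  (forall i, (i < length l)%nat -> c1 i = c2 i) -> lin_comb l c1 = lin_comb l c2.
Proof.
  revert c1 c2; induction l as [|x l IH]; intros c1 c2 H; simpl; auto.
  rewrite (H O) by (simpl; lia). f_equal. apply IH. intros i Hi. apply H. simpl; lia.
Qed.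

Lemma lin_comb_add (l : list V) c1 c2 :
  lin_comb l (fun i => c1 i + c2 i) = ns_add (lin_comb l c1) (lin_comb l c2).
Proof.
  revert c1 c2; induction l as [|x l IH]; intros c1 c2; simpl.
  - now rewrite ns_add0.
  - rewrite IH, ns_scalDl, <- !ns_addA. f_equal. rewrite !ns_addA. f_equal. apply ns_addC.
Qed.

Lemma lin_comb_scal (l : list V) c0 c : lin_comb l (fun i => c0 * c i) = ns_scal c0 (lin_comb l c).
Proof.
  revert c; induction l as [|x l IH]; intros c; simpl.
  - now rewrite ns_scal_zero.
  - rewrite IH, ns_scalDr, ns_scalA. reflexivity.
Qed.

Lemma lin_comb_zero (l : list V) : lin_comb l (fun _ => 0) = ns_zero.
Proof. induction l as [|x l IH]; simpl; auto. rewrite IH, ns_scal0. apply ns_add0. Qed.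

Lemma lin_comb_atom (l : list V) n :
  lin_comb l (fun i => if Nat.eqb n i then 1 else 0) = nth n l ns_zero.
Proof.
  revert n; induction l as [|x l IH]; intros [|n]; simpl; auto.
  - rewrite ns_scal1, lin_comb_zero. apply ns_add0r.
  - rewrite ns_scal0, ns_add0. apply IH.
Qed.

Lemma vdenote_lin_comb (env : list V) e : vdenote env e = lin_comb env (vcoef e).
Proof.
  induction e; simpl.
  - symmetry; apply lin_comb_atom.
  - symmetry; apply lin_comb_zero.
  - rewrite lin_comb_add, IHe1, IHe2; reflexivity.
  - rewrite IHe, ns_opp_scal, <- lin_comb_scal. apply lin_comb_ext. intros; ring.
  - rewrite lin_comb_scal, IHe. reflexivity.
Qed.

Lemma vdenote_eq (env : list V) e1 e2 :
  (forall i, (i < length env)%nat -> vcoef e1 i = vcoef e2 i) -> vdenote env e1 = vdenote env e2.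
Proof. intro H. rewrite !vdenote_lin_comb. now apply lin_comb_ext. Qed.

End LinComb.

Ltac vatoms t acc :=
  lazymatch t with
  | ns_add ?a ?b => let acc := vatoms a acc in vatoms b acc
  | ns_sub ?a ?b => let acc := vatoms a acc in vatoms b acc
  | ns_opp ?a => vatoms a acc
  | ns_scal _ ?a => vatoms a acc
  | ns_zero => acc
  | _ => lazymatch acc with
         | context [cons t _] => acc
         | _ => constr:(cons t acc)
         end
  end.

Ltac vindex x l :=
  lazymatch l with
  | cons x _ => constr:(O)
  | cons _ ?l' => let n := vindex x l' in constr:(S n)
  end.

Ltac vreify t env :=
  lazymatch t with
  | ns_add ?a ?b => let ea := vreify a env in let eb := vreify b env in constr:(VAdd ea eb)
  | ns_sub ?a ?b => let ea := vreify a env in let eb := vreify b env in constr:(VAdd ea (VOpp eb))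
  | ns_opp ?a => let ea := vreify a env in constr:(VOpp ea)
  | ns_scal ?c ?a => let ea := vreify a env in constr:(VScal c ea)
  | ns_zero => constr:(VZero)
  | _ => let n := vindex t env in constr:(VAtom n)
  end.

(** [vring_coefs] reduces a vector identity to one real identity per atom;
    [vring] closes these by [ring] (use [vring_coefs; field] for divisions). *)
Ltac vring_coefs :=
  lazymatch goal with
  | |- @eq (ns_car ?V) ?x ?y =>
      let env0 := constr:(@nil (ns_car V)) in
      let env1 := vatoms x env0 in
      let env := vatoms y env1 in
      let e1 := vreify x env in
      let e2 := vreify y env in
      change (vdenote env e1 = vdenote env e2); apply vdenote_eq;
      let i := fresh "i" in let Hi := fresh "Hi" in
      intros i Hi; cbn [length] in Hi;
      repeat (destruct i as [|i]; [cbn [vcoef Nat.eqb] | try (exfalso; lia)])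
  end.

Ltac vring := vring_coefs; try ring.

Lemma Rabs_le_bounds a b : Rabs a <= b -> - b <= a <= b.
Proof. unfold Rabs; destruct (Rcase_abs a); lra. Qed.

Lemma inv_succ_small eps : 0 < eps -> exists N, forall n, (n >= N)%nat -> / (INR n + 1) < eps.
Proof.
  intros He. destruct (INR_archimed eps 1 ltac:(lra)) as [N HN]. exists N. intros n Hn.
  apply le_INR in Hn. pose proof (pos_INR N).
  apply Rmult_lt_reg_l with (INR n + 1); [lra|]. rewrite Rinv_r by lra.
  assert (INR N * eps <= (INR n + 1) * eps) by (apply Rmult_le_compat_r; lra). lra.
Qed.

Definition dual_cv {V : NormedSpace} (F : nat -> V -> R) (f : V -> R) : Prop :=
  forall eps, eps > 0 -> exists N, forall n, (n >= N)%nat -> dual_bound (fun x => F n x - f x) eps.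

Lemma finite_of {V : NormedSpace} (phi : V -> ERbar) x : phi x <> PInf -> exists p, phi x = Fin p.
Proof. destruct (phi x); [eauto | congruence]. Qed.

Section NormedBasics.
Context {V : NormedSpace}.
Implicit Types x y z : V.

Lemma norm_sub_triangle x y z :
  ns_norm (ns_sub x z) <= ns_norm (ns_sub x y) + ns_norm (ns_sub y z).
Proof. replace (ns_sub x z) with (ns_add (ns_sub x y) (ns_sub y z)) by vring. apply ns_normD. Qed.

Lemma norm_sub_sym x y : ns_norm (ns_sub x y) = ns_norm (ns_sub y x).
Proof. replace (ns_sub x y) with (ns_opp (ns_sub y x)) by vring. apply ns_norm_opp. Qed.

Lemma norm_sub_self x : ns_norm (ns_sub x x) = 0.
Proof. replace (ns_sub x x) with (@ns_zero V) by vring. apply ns_norm_zero. Qed.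

Lemma norm_sub_le x y : ns_norm (ns_sub x y) <= ns_norm x + ns_norm y.
Proof. unfold ns_sub. rewrite <- (ns_norm_opp y). apply ns_normD. Qed.

Lemma norm_le_sub x y : ns_norm x <= ns_norm (ns_sub x y) + ns_norm y.
Proof. replace x with (ns_add (ns_sub x y) y) at 1 by vring. apply ns_normD. Qed.

Lemma small_multiple r y : 0 < r -> exists s, 0 < s /\ ns_norm (ns_scal s y) < r.
Proof.
  intros Hr. pose proof (ns_norm_ge0 y) as Hy.
  exists (r / (2 * (ns_norm y + 1))).
  assert (Hp : 0 < r / (2 * (ns_norm y + 1))) by (apply Rdiv_lt_0_compat; lra).
  split; auto. rewrite ns_normZ, Rabs_right by lra.
  replace (r / (2 * (ns_norm y + 1)) * ns_norm y) with (r / 2 * (ns_norm y / (ns_norm y + 1)))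
    by (field; lra).
  assert (ns_norm y / (ns_norm y + 1) < 1).
  { apply Rmult_lt_reg_r with (ns_norm y + 1); [lra|].
    unfold Rdiv. rewrite Rmult_assoc, Rinv_l by lra. lra. }
  nra.
Qed.

Lemma norm_cv_iff (u : nat -> V) x : norm_cv u x <->
  forall eps, eps > 0 -> exists N, forall n, (n >= N)%nat -> ns_norm (ns_sub (u n) x) < eps.
Proof.
  unfold norm_cv, Un_cv, R_dist.
  split; intros H eps Heps; destruct (H eps Heps) as [N HN]; exists N; intros n Hn;
    specialize (HN n Hn); rewrite Rminus_0_r, Rabs_right in *; auto;
    apply Rle_ge, ns_norm_ge0.
Qed.

Lemma lin_add (f : V -> R) x y : is_linear f -> f (ns_add x y) = f x + f y.
Proof. intros [Ha _]; apply Ha. Qed.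

Lemma lin_scal (f : V -> R) c x : is_linear f -> f (ns_scal c x) = c * f x.
Proof. intros [_ Hs]; apply Hs. Qed.

Lemma lin_sub (f : V -> R) x y : is_linear f -> f (ns_sub x y) = f x - f y.
Proof. intros Hf. unfold ns_sub. rewrite lin_add, ns_opp_scal, lin_scal by exact Hf. ring. Qed.

Lemma dual_bound_pos (f : V -> R) : in_dual f -> exists M, 0 < M /\ dual_bound f M.
Proof.
  intros [_ [M HM]]. exists (Rabs M + 1). split; [pose proof (Rabs_pos M); lra|].
  intros x. specialize (HM x). pose proof (ns_norm_ge0 x). pose proof (Rle_abs M).
  assert (M * ns_norm x <= (Rabs M + 1) * ns_norm x) by (apply Rmult_le_compat_r; lra). lra.
Qed.

Lemma dual_bound_le (f : V -> R) c M x :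
  dual_bound f c -> 0 <= c -> ns_norm x <= M -> Rabs (f x) <= c * M.
Proof. intros Hf Hc Hx. eapply Rle_trans; [apply Hf|]. now apply Rmult_le_compat_l. Qed.

Lemma norm_cv_weak_cv (u : nat -> V) x : norm_cv u x -> weak_cv u x.
Proof.
  intros Hu f Hf eps Heps. destruct (dual_bound_pos f Hf) as [M [HM HfM]].
  destruct (proj1 (norm_cv_iff u x) Hu (eps / M) ltac:(apply Rdiv_lt_0_compat; lra)) as [N HN].
  exists N. intros n Hn. unfold R_dist. rewrite <- lin_sub by apply Hf.
  eapply Rle_lt_trans; [apply HfM|].
  apply Rlt_le_trans with (M * (eps / M)); [apply Rmult_lt_compat_l; auto|].
  right; field; lra.
Qed.

Lemma weak_cv_sub (u v : nat -> V) x y :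
  weak_cv u x -> weak_cv v y -> weak_cv (fun n => ns_sub (u n) (v n)) (ns_sub x y).
Proof.
  intros Hu Hv f Hf. rewrite lin_sub by apply Hf.
  apply (Un_cv_ext (fun n => f (u n) - f (v n))).
  - intros n. symmetry. apply lin_sub, Hf.
  - apply CV_minus; auto.
Qed.

Lemma pairing_cv (F : nat -> V -> R) (f : V -> R) (x : nat -> V) y M N0 :
  in_dual f -> dual_cv F f -> (forall n, (n >= N0)%nat -> ns_norm (x n) <= M) ->
  weak_cv x y -> Un_cv (fun n => F n (x n)) (f y).
Proof.
  intros Hf HF Hx Hw eps Heps.
  assert (HM : 0 < Rabs M + 1) by (pose proof (Rabs_pos M); lra).
  destruct (HF (eps / 2 / (Rabs M + 1)) ltac:(apply Rdiv_lt_0_compat; lra)) as [N1 HN1].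
  destruct (Hw f Hf (eps / 2) ltac:(lra)) as [N2 HN2].
  exists (max N0 (max N1 N2)). intros n Hn. unfold R_dist in *.
  specialize (HN2 n ltac:(lia)).
  assert (Hb : ns_norm (x n) <= Rabs M + 1) by (pose proof (Rle_abs M); specialize (Hx n ltac:(lia)); lra).
  pose proof (dual_bound_le _ _ _ _ (HN1 n ltac:(lia)) ltac:(left; apply Rdiv_lt_0_compat; lra) Hb) as H1.
  replace (eps / 2 / (Rabs M + 1) * (Rabs M + 1)) with (eps / 2) in H1 by (field; lra).
  replace (F n (x n) - f y) with ((F n (x n) - f (x n)) + (f (x n) - f y)) by ring.
  eapply Rle_lt_trans; [apply Rabs_triang|]. lra.
Qed.

End NormedBasics.

Lemma zorn_preorder (T : Type) (t0 : T) (R : T -> T -> Prop) :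
  (forall t, R t t) -> (forall r s t, R r s -> R s t -> R r t) ->
  (forall A : T -> Prop, (forall s t, A s -> A t -> R s t \/ R t s) ->
     exists t, forall s, A s -> R s t) ->
  exists t, forall s, R t s -> R s t.
Proof.
  intros Hrefl Htrans Hchain.
  destruct (@classical_sets.ZL_preorder T t0 (fun s t => boolp.asbool (R s t))) as [t Hmax].
  - intros x. apply boolp.asboolT, Hrefl.
  - intros r s t H1 H2. apply boolp.asboolT.
    apply (Htrans r s t); apply boolp.asboolW; assumption.
  - intros A HA. destruct (Hchain A) as [t Ht].
    + intros s t Hs Ht. destruct (HA s t Hs Ht); [left|right]; apply boolp.asboolW; assumption.
    + exists t. intros s Hs. apply boolp.asboolT. auto.
  - exists t. intros s Hs. apply boolp.asboolW, Hmax, boolp.asboolT, Hs.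
Qed.

Lemma div_le_div a b s t : 0 < s -> 0 < t -> a * t <= b * s -> a / s <= b / t.
Proof.
  intros Hs Ht H.
  replace (a / s) with ((a * t) * / (s * t)) by (field; lra).
  replace (b / t) with ((b * s) * / (s * t)) by (field; lra).
  apply Rmult_le_compat_r; [|exact H]. left; apply Rinv_0_lt_compat, Rmult_lt_0_compat; lra.
Qed.

(** Hahn–Banach.  [U] is a convex set containing the open ball of radius
    [r] around the origin; a linear functional defined on a subspace and
    bounded by 1 on [U] extends (Zorn) to the whole space, and is then
    continuous since it is bounded on the ball. *)

Section HahnBanach.
Context {V : NormedSpace} (U : V -> Prop) (r : R).
Hypothesis Hr : 0 < r.
Hypothesis HUconvex : ns_convex_set U.
Hypothesis HUball : forall x, ns_norm x < r -> U x.

Definition dominated (M : V -> Prop) (g : V -> R) : Prop :=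
  M ns_zero /\ (forall x y, M x -> M y -> M (ns_add x y)) /\ (forall c x, M x -> M (ns_scal c x)) /\
  (forall x y, M x -> M y -> g (ns_add x y) = g x + g y) /\
  (forall c x, M x -> g (ns_scal c x) = c * g x) /\
  (forall x, M x -> U x -> g x <= 1).

Definition extends (M1 : V -> Prop) (g1 : V -> R) (M2 : V -> Prop) (g2 : V -> R) : Prop :=
  (forall x, M1 x -> M2 x) /\ (forall x, M1 x -> g1 x = g2 x).

Lemma U_zero : U ns_zero.
Proof. apply HUball. rewrite ns_norm_zero. exact Hr. Qed.

Lemma dominated_zero M g : dominated M g -> g ns_zero = 0.
Proof. intros (H0 & _ & _ & _ & Hs & _). rewrite <- (ns_scal0 ns_zero), Hs by exact H0. ring. Qed.

Lemma decomp_unique (M : V -> Prop) (g : V -> R) (y : V) m1 m2 t1 t2 :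
  dominated M g -> ~ M y -> M m1 -> M m2 ->
  ns_add m1 (ns_scal t1 y) = ns_add m2 (ns_scal t2 y) -> m1 = m2 /\ t1 = t2.
Proof.
  intros (H0 & Hadd & Hsc & _) Hy H1 H2 H.
  assert (Ht : t1 = t2).
  { destruct (Req_dec t1 t2) as [|Hne]; auto. exfalso. apply Hy.
    replace y with (ns_scal (1 / (t1 - t2)) (ns_add m2 (ns_scal (-1) m1))).
    - apply Hsc, Hadd; auto.
    - replace (ns_add m2 (ns_scal (-1) m1))
        with (ns_sub (ns_add m2 (ns_scal t2 y)) (ns_add m1 (ns_scal t2 y))) by vring.
      rewrite <- H. vring_coefs; field; lra. }
  split; auto. subst t2.
  replace m1 with (ns_sub (ns_add m1 (ns_scal t1 y)) (ns_scal t1 y)) by vring.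
  rewrite H. vring.
Qed.

Lemma extend_one_dim M g y c : dominated M g -> ~ M y ->
  (forall m t, M m -> U (ns_add m (ns_scal t y)) -> g m + t * c <= 1) ->
  exists M' g', dominated M' g' /\ extends M g M' g' /\ M' y /\ g' y = c.
Proof.
  intros HG Hy Hc.
  pose (M' := fun x => exists m t, M m /\ x = ns_add m (ns_scal t y)).
  pose (P := fun x (p : V * R) => M (fst p) /\ x = ns_add (fst p) (ns_scal (snd p) y)).
  pose (g' := fun x => let p := epsilon (inhabits (ns_zero, 0)) (P x) in g (fst p) + snd p * c).
  assert (Hg' : forall m t, M m -> g' (ns_add m (ns_scal t y)) = g m + t * c).
  { intros m t Hm. unfold g'.
    destruct (epsilon_spec (inhabits (ns_zero, 0)) (P (ns_add m (ns_scal t y)))) as [Hp1 Hp2].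
    { exists (m, t). split; auto. }
    destruct (decomp_unique M g y _ _ _ _ HG Hy Hp1 Hm (eq_sym Hp2)) as [-> ->]. reflexivity. }
  pose proof HG as (H0 & Hadd & Hsc & Hgadd & Hgsc & Hdom).
  exists M', g'. split; [|split; [|split]].
  - split; [|split; [|split; [|split; [|split]]]].
    + exists ns_zero, 0. split; auto. vring.
    + intros x z (m1 & t1 & Hm1 & ->) (m2 & t2 & Hm2 & ->).
      exists (ns_add m1 m2), (t1 + t2). split; auto. vring.
    + intros d x (m1 & t1 & Hm1 & ->). exists (ns_scal d m1), (d * t1). split; auto. vring.
    + intros x z (m1 & t1 & Hm1 & ->) (m2 & t2 & Hm2 & ->).
      replace (ns_add (ns_add m1 (ns_scal t1 y)) (ns_add m2 (ns_scal t2 y)))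
        with (ns_add (ns_add m1 m2) (ns_scal (t1 + t2) y)) by vring.
      rewrite !Hg', Hgadd; auto. ring.
    + intros d x (m1 & t1 & Hm1 & ->).
      replace (ns_scal d (ns_add m1 (ns_scal t1 y)))
        with (ns_add (ns_scal d m1) (ns_scal (d * t1) y)) by vring.
      rewrite !Hg', Hgsc; auto. ring.
    + intros x (m1 & t1 & Hm1 & ->) HU. rewrite Hg'; auto.
  - split.
    + intros x Hx. exists x, 0. split; auto. vring.
    + intros x Hx. replace x with (ns_add x (ns_scal 0 y)) at 2 by vring. rewrite Hg'; auto. ring.
  - exists ns_zero, 1. split; auto. vring.
  - replace y with (ns_add ns_zero (ns_scal 1 y)) at 1 by vring. rewrite Hg'; auto.
    rewrite (dominated_zero M g HG). ring.
Qed.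

(** The constraints on the new value: every lower constraint (from points
    [m1 - s y] of [U]) lies below every upper constraint (from [m2 + t y]). *)
Lemma extension_constraints M g y m1 s m2 t : dominated M g -> M m1 -> M m2 -> 0 < s -> 0 < t ->
  U (ns_add m1 (ns_scal (- s) y)) -> U (ns_add m2 (ns_scal t y)) ->
  (g m1 - 1) / s <= (1 - g m2) / t.
Proof.
  intros (H0 & Hadd & Hsc & Hgadd & Hgsc & Hdom) Hm1 Hm2 Hs Ht HU1 HU2.
  set (l := t / (s + t)).
  assert (Hl : 0 <= l <= 1).
  { unfold l; split; [apply Rmult_le_pos; [lra|left; apply Rinv_0_lt_compat; lra]|].
    apply Rmult_le_reg_r with (s + t); [lra|]. unfold Rdiv. rewrite Rmult_assoc, Rinv_l by lra. lra. }
  pose proof (HUconvex _ _ l Hl HU1 HU2) as HU.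
  replace (ns_add (ns_scal l (ns_add m1 (ns_scal (- s) y))) (ns_scal (1 - l) (ns_add m2 (ns_scal t y))))
    with (ns_add (ns_scal l m1) (ns_scal (1 - l) m2)) in HU by (vring_coefs; unfold l; field; lra).
  pose proof (Hdom _ (Hadd _ _ (Hsc l _ Hm1) (Hsc (1 - l) _ Hm2)) HU) as Hd.
  rewrite Hgadd, !Hgsc in Hd by auto.
  apply div_le_div; auto.
  replace (1 - l) with (s / (s + t)) in Hd by (unfold l; field; lra). unfold l in Hd.
  assert (Hd' : t * g m1 + s * g m2 <= s + t).
  { apply Rmult_le_reg_r with (/ (s + t)); [apply Rinv_0_lt_compat; lra|].
    replace ((t * g m1 + s * g m2) * / (s + t)) with (t / (s + t) * g m1 + s / (s + t) * g m2)
      by (field; lra).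
    replace ((s + t) * / (s + t)) with 1 by (field; lra). exact Hd. }
  lra.
Qed.

(** By completeness of the reals, an admissible value exists. *)
Lemma extension_value M g y : dominated M g ->
  exists c, forall m t, M m -> U (ns_add m (ns_scal t y)) -> g m + t * c <= 1.
Proof.
  intros HG. pose proof HG as (H0 & _).
  pose (E := fun l => exists m s, M m /\ 0 < s /\ U (ns_add m (ns_scal (- s) y)) /\ l = (g m - 1) / s).
  destruct (small_multiple r y Hr) as [s0 [Hs0 Hn0]].
  assert (HUp : U (ns_add ns_zero (ns_scal s0 y))) by (rewrite ns_add0; apply HUball, Hn0).
  assert (HUn : U (ns_add ns_zero (ns_scal (- s0) y))).
  { rewrite ns_add0. apply HUball. rewrite ns_normZ, Rabs_Ropp, <- ns_normZ. exact Hn0. }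
  assert (Hb : bound E).
  { exists ((1 - g ns_zero) / s0). intros l (m & s & Hm & Hs & HU & ->).
    eapply extension_constraints; eauto. }
  assert (Hne : exists l, E l) by (exists ((g ns_zero - 1) / s0), ns_zero, s0; auto).
  destruct (completeness E Hb Hne) as [c [Hub Hlub]].
  exists c. intros m t Hm HU.
  destruct (Rtotal_order t 0) as [Hlt|[Heq|Hgt]].
  - assert (Hl : E ((g m - 1) / (- t))).
    { exists m, (- t). rewrite Ropp_involutive. repeat split; auto; lra. }
    specialize (Hub _ Hl).
    assert (g m - 1 <= - t * c).
    { replace (g m - 1) with ((g m - 1) / (- t) * (- t)) by (field; lra).
      rewrite (Rmult_comm (- t) c). apply Rmult_le_compat_r; lra. }
    lra.
  - subst t. rewrite Rmult_0_l, Rplus_0_r.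
    replace (ns_add m (ns_scal 0 y)) with m in HU by vring. apply HG; auto.
  - assert (Hup : is_upper_bound E ((1 - g m) / t)).
    { intros l (m1 & s & Hm1 & Hs & HU1 & ->). eapply extension_constraints; eauto. }
    specialize (Hlub _ Hup).
    assert (t * c <= 1 - g m).
    { replace (1 - g m) with (t * ((1 - g m) / t)) by (field; lra).
      apply Rmult_le_compat_l; lra. }
    lra.
Qed.

Lemma chain_union_dominated (F : (V -> Prop) * (V -> R) -> Prop) :
  (forall p, F p -> dominated (fst p) (snd p)) ->
  (forall p q, F p -> F q -> extends (fst p) (snd p) (fst q) (snd q) \/
                             extends (fst q) (snd q) (fst p) (snd p)) ->
  (exists p, F p) ->
  exists M g, dominated M g /\ forall p, F p -> extends (fst p) (snd p) M g.
Proof.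
  intros HF Hchain [p1 Hp1].
  pose (Ms := fun x => exists p, F p /\ fst p x).
  pose (gs := fun x => snd (epsilon (inhabits p1) (fun p => F p /\ fst p x)) x).
  assert (Hgs : forall p x, F p -> fst p x -> gs x = snd p x).
  { intros p x Hp Hx. unfold gs.
    destruct (epsilon_spec (inhabits p1) (fun p => F p /\ fst p x)) as [Hq Hqx]; [eauto|].
    destruct (Hchain p _ Hp Hq) as [[_ E]|[_ E]]; [symmetry|]; auto. }
  assert (Hcommon : forall x y, Ms x -> Ms y -> exists p, F p /\ fst p x /\ fst p y).
  { intros x y [p [Hp Hx]] [q [Hq Hy]].
    destruct (Hchain p q Hp Hq) as [[Hs _]|[Hs _]]; [exists q|exists p]; auto. }
  exists Ms, gs. split.
  - split; [|split; [|split; [|split; [|split]]]].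
    + exists p1. split; auto. apply (HF p1 Hp1).
    + intros x y Hx Hy. destruct (Hcommon x y Hx Hy) as (p & Hp & Hpx & Hpy).
      exists p. split; auto. apply (HF p Hp); auto.
    + intros c x [p [Hp Hx]]. exists p. split; auto. apply (HF p Hp); auto.
    + intros x y Hx Hy. destruct (Hcommon x y Hx Hy) as (p & Hp & Hpx & Hpy).
      pose proof (HF p Hp) as (_ & Hadd & _ & Hgadd & _).
      rewrite !(Hgs p) by auto. auto.
    + intros c x [p [Hp Hx]]. pose proof (HF p Hp) as (_ & _ & Hsc & _ & Hgsc & _).
      rewrite !(Hgs p) by auto. auto.
    + intros x [p [Hp Hx]] HU. rewrite (Hgs p) by auto. apply (HF p Hp); auto.
  - intros p Hp. split.
    + intros x Hx. exists p. auto.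
    + intros x Hx. symmetry. apply Hgs; auto.
Qed.

(** A functional dominated on the whole space is continuous: it is bounded
    by 1 on the ball of radius [r], hence has dual norm at most [2 / r]. *)
Lemma dominated_total_continuous g : dominated (fun _ => True) g -> in_dual g.
Proof.
  intros HG. pose proof HG as (_ & _ & _ & Hgadd & Hgsc & Hdom).
  split; [split; intros; auto|].
  exists (2 / r). intros x.
  destruct (Req_dec (ns_norm x) 0) as [Hx0|Hx0].
  - apply ns_norm_eq0 in Hx0. subst x.
    rewrite (dominated_zero _ g HG), Rabs_R0, ns_norm_zero. lra.
  - pose proof (ns_norm_ge0 x) as Hxg.
    set (s := r / (2 * ns_norm x)).
    assert (Hs : 0 < s) by (unfold s; apply Rdiv_lt_0_compat; lra).
    assert (Hn : s * ns_norm x < r) by (unfold s; field_simplify; lra).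
    assert (H1 : g (ns_scal s x) <= 1).
    { apply Hdom; auto. apply HUball. rewrite ns_normZ, Rabs_right by lra. exact Hn. }
    assert (H2 : g (ns_scal (- s) x) <= 1).
    { apply Hdom; auto. apply HUball. rewrite ns_normZ, Rabs_Ropp, Rabs_right by lra. exact Hn. }
    rewrite Hgsc in H1, H2 by auto.
    replace (2 / r * ns_norm x) with (1 / s) by (unfold s; field; lra).
    apply Rabs_le. split; apply Rmult_le_reg_l with s; auto; field_simplify; lra.
Qed.

Section Normalised.
Variable z0 : V.
Hypothesis Hz0 : ~ U z0.

Definition normalised_ext :=
  { p : (V -> Prop) * (V -> R) | dominated (fst p) (snd p) /\ fst p z0 /\ snd p z0 = 1 }.

Definition ext_le (e1 e2 : normalised_ext) : Prop :=
  extends (fst (proj1_sig e1)) (snd (proj1_sig e1)) (fst (proj1_sig e2)) (snd (proj1_sig e2)).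

Lemma normalised_on_line : exists M g, dominated M g /\ M z0 /\ g z0 = 1.
Proof.
  assert (HG : dominated (fun x => x = ns_zero) (fun _ => 0)).
  { split; [|split; [|split; [|split; [|split]]]]; intros; subst; auto; try ring; try lra.
    - apply ns_add0.
    - apply ns_scal_zero. }
  assert (Hnz : ~ z0 = ns_zero) by (intros ->; apply Hz0, U_zero).
  destruct (extend_one_dim _ _ z0 1 HG Hnz) as (M' & g' & HG' & _ & HMy & Hgy); eauto.
  intros m t -> HU. rewrite Rplus_0_l, Rmult_1_r.
  destruct (Rle_or_lt t 1) as [|Ht]; auto. exfalso. apply Hz0.
  assert (Hl : 0 <= 1 / t <= 1).
  { split; [unfold Rdiv; apply Rmult_le_pos; [lra|left; apply Rinv_0_lt_compat; lra]|].
    apply Rmult_le_reg_r with t; [lra|]. unfold Rdiv; rewrite Rmult_assoc, Rinv_l by lra. lra. }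
  pose proof (HUconvex _ _ (1 / t) Hl HU U_zero) as H.
  replace (ns_add (ns_scal (1 / t) (ns_add ns_zero (ns_scal t z0))) (ns_scal (1 - 1 / t) ns_zero))
    with z0 in H by (vring_coefs; field; lra). exact H.
Qed.

Lemma maximal_ext_total (e : normalised_ext) :
  (forall s, ext_le e s -> ext_le s e) -> forall y, fst (proj1_sig e) y.
Proof.
  destruct e as [[M g] [HG [Hz Hg]]]. simpl. intros Hmax y. apply NNPP. intros Hy.
  destruct (extension_value M g y HG) as [c Hc].
  destruct (extend_one_dim M g y c HG Hy Hc) as (M' & g' & HG' & [He1 He2] & HMy & _).
  assert (Hs : dominated M' g' /\ M' z0 /\ g' z0 = 1) by (rewrite <- He2; auto).
  destruct (Hmax (exist _ (M', g') Hs)) as [Hb _]; [split; auto|].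
  apply Hy, Hb, HMy.
Qed.

Theorem hahn_banach : exists f : V -> R, in_dual f /\ f z0 = 1 /\ forall x, U x -> f x <= 1.
Proof.
  destruct normalised_on_line as (M0 & g0 & H0).
  pose (e0 := exist _ (M0, g0) H0 : normalised_ext).
  destruct (zorn_preorder normalised_ext e0 ext_le) as [e Hmax].
  - intros e. split; auto.
  - intros e1 e2 e3 [H1 H2] [H3 H4]. split; auto. intros x Hx. rewrite H2 by auto. auto.
  - intros Ch HCh. destruct (classic (exists e, Ch e)) as [[e1 He1]|Hempty].
    2:{ exists e0. intros s Hs. exfalso; eauto. }
    destruct (chain_union_dominated (fun p => exists e : normalised_ext, Ch e /\ proj1_sig e = p))
      as (M & g & HG & Hub).
    + intros p [e [_ <-]]. apply (proj2_sig e).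
    + intros p q [e [He <-]] [f [Hf <-]]. apply HCh; auto.
    + exists (proj1_sig e1). eauto.
    + destruct (Hub (proj1_sig e1) ltac:(eauto)) as [Hsub Hval].
      pose proof (proj2_sig e1) as (_ & Hz1 & Hg1).
      assert (Hn : dominated M g /\ M z0 /\ g z0 = 1).
      { split; auto. split; auto. rewrite <- Hval; auto. }
      exists (exist _ (M, g) Hn). intros s Hs. apply (Hub (proj1_sig s)). eauto.
  - pose proof (maximal_ext_total e Hmax) as Htotal. clear Hmax.
    destruct e as [[M g] [HG [Hz Hg]]]. simpl in Htotal, HG, Hg.
    destruct HG as (_ & _ & _ & Hga & Hgs & Hd).
    exists g. split; [|split; auto].
    apply dominated_total_continuous. repeat split; intros; auto.
Qed.

End Normalised.
End HahnBanach.

(** A closed convex set is separated from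
    an outside point by a continuous functional (Hahn–Banach applied to the
    set fattened by a ball), hence closed convex sets are weakly
    sequentially closed and convex lsc functions weakly sequentially lsc. *)

Section Separation.
Context {V : NormedSpace}.
Implicit Types x y z : V.

Lemma closed_complement_open (D : V -> Prop) y : ns_closed_set D -> ~ D y ->
  exists d, 0 < d /\ forall z, ns_norm (ns_sub z y) < d -> ~ D z.
Proof.
  intros HD Hy. apply NNPP. intros Hno.
  assert (Hnear : forall n : nat, exists z, D z /\ ns_norm (ns_sub z y) < / (INR n + 1)).
  { intros n. apply NNPP. intros Hn. apply Hno. exists (/ (INR n + 1)). split.
    - apply Rinv_0_lt_compat. pose proof (pos_INR n); lra.
    - intros z Hz Dz. apply Hn. eauto. }
  pose (u := fun n => epsilon (inhabits y) (fun z => D z /\ ns_norm (ns_sub z y) < / (INR n + 1))).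
  assert (Hu : forall n, D (u n) /\ ns_norm (ns_sub (u n) y) < / (INR n + 1)).
  { intros n. apply epsilon_spec, Hnear. }
  apply Hy, (HD u y); [intros n; apply Hu|].
  apply norm_cv_iff. intros eps He. destruct (inv_succ_small eps He) as [N HN]. exists N.
  intros n Hn. specialize (Hu n). specialize (HN n Hn). lra.
Qed.

Theorem separation (D : V -> Prop) x : ns_closed_set D -> ns_convex_set D -> ~ D x ->
  (exists d0, D d0) ->
  exists f eps, in_dual f /\ 0 < eps /\ forall d, D d -> f d + eps <= f x.
Proof.
  intros Hcl Hcv Hx [d0 Hd0].
  destruct (closed_complement_open D x Hcl Hx) as [r [Hr Hball]].
  (* U = (D - d0) + open ball of radius r: convex, contains the ball, misses x - d0 *)
  pose (U := fun z => exists d b, D d /\ ns_norm b < r /\ z = ns_add (ns_sub d d0) b).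
  assert (HUc : ns_convex_set U).
  { intros z1 z2 l Hl (d1 & b1 & Hd1 & Hb1 & ->) (d2 & b2 & Hd2 & Hb2 & ->).
    exists (ns_add (ns_scal l d1) (ns_scal (1 - l) d2)), (ns_add (ns_scal l b1) (ns_scal (1 - l) b2)).
    split; [apply Hcv; auto|]. split; [|vring].
    eapply Rle_lt_trans; [apply ns_normD|]. rewrite !ns_normZ, !Rabs_right by lra.
    pose proof (ns_norm_ge0 b1); pose proof (ns_norm_ge0 b2).
    destruct (Rlt_or_le 0 l) as [Hl0|Hl0]; [|replace l with 0 by lra]; nra. }
  assert (HUb : forall z, ns_norm z < r -> U z).
  { intros z Hz. exists d0, z. split; auto. split; auto. vring. }
  assert (Hz0 : ~ U (ns_sub x d0)).
  { intros (d & b & Hd & Hb & E). apply (Hball d); auto.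
    replace (ns_sub d x) with (ns_opp b).
    - rewrite ns_norm_opp. exact Hb.
    - replace (ns_sub d x) with (ns_sub (ns_sub d d0) (ns_sub x d0)) by vring. rewrite E. vring. }
  destruct (hahn_banach U r Hr HUc HUb (ns_sub x d0) Hz0) as (f & Hf & Hf1 & HfU).
  destruct (small_multiple r (ns_sub x d0) Hr) as [s [Hs Hsn]].
  exists f, s. split; [exact Hf|split; [exact Hs|]]. intros d Hd.
  assert (HU : U (ns_add (ns_sub d d0) (ns_scal s (ns_sub x d0)))) by (exists d, (ns_scal s (ns_sub x d0)); auto).
  specialize (HfU _ HU). destruct Hf as [Hl _].
  rewrite lin_add, lin_scal, !lin_sub in HfU by auto. rewrite lin_sub in Hf1 by auto.
  rewrite Hf1 in HfU. lra.
Qed.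

Lemma closed_convex_weakly_closed (D : V -> Prop) (y : nat -> V) x N :
  ns_closed_set D -> ns_convex_set D ->
  (forall n, (n >= N)%nat -> D (y n)) -> weak_cv y x -> D x.
Proof.
  intros Hcl Hcv HD Hw. apply NNPP. intros Hx.
  destruct (separation D x Hcl Hcv Hx) as (f & eps & Hf & He & Hsep); [exists (y N); apply HD; lia|].
  destruct (Hw f Hf eps He) as [N2 HN2].
  specialize (HN2 (max N N2) ltac:(lia)). specialize (Hsep _ (HD (max N N2) ltac:(lia))).
  apply Rabs_def2 in HN2. lra.
Qed.

Lemma sublevel_closed_convex (phi : V -> ERbar) c : convex_fun phi -> lsc_fun phi ->
  ns_closed_set (fun x => ERle (phi x) (Fin c)) /\ ns_convex_set (fun x => ERle (phi x) (Fin c)).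
Proof.
  intros Hcv Hlsc. split.
  - intros u x Hu Hc. exact (Hlsc u x c Hc Hu).
  - intros x y t Ht Hx Hy.
    destruct (Req_dec t 0) as [->|H0].
    { replace (ns_add (ns_scal 0 x) (ns_scal (1 - 0) y)) with y by vring. exact Hy. }
    destruct (Req_dec t 1) as [->|H1].
    { replace (ns_add (ns_scal 1 x) (ns_scal (1 - 1) y)) with x by vring. exact Hx. }
    specialize (Hcv x y t ltac:(lra)).
    destruct (phi x) as [a|]; [|contradiction]. destruct (phi y) as [b|]; [|contradiction].
    simpl in Hx, Hy.
    destruct (phi (ns_add (ns_scal t x) (ns_scal (1 - t) y))) as [p|]; simpl in *; [|contradiction].
    nra.
Qed.

Lemma convex_lsc_weakly_lsc (phi : V -> ERbar) (u : nat -> V) x c N :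
  convex_fun phi -> lsc_fun phi -> weak_cv u x ->
  (forall n, (n >= N)%nat -> ERle (phi (u n)) (Fin c)) -> ERle (phi x) (Fin c).
Proof.
  intros Hcv Hlsc Hw Hn. destruct (sublevel_closed_convex phi c Hcv Hlsc) as [H1 H2].
  exact (closed_convex_weakly_closed _ u x N H1 H2 Hn Hw).
Qed.

End Separation.

(** Baire's theorem, in the form: if countably many closed sets cover a
    ball of a Banach space, one of them contains a ball.  Otherwise one
    builds nested closed balls, the [k]-th avoiding [F k], whose centres
    form a Cauchy sequence; its limit lies in no [F k]. *)

Section Baire.
Context {V : NormedSpace} (F : nat -> V -> Prop) (x0 : V) (r0 : R).
Hypothesis HVcomplete : ns_complete V.
Hypothesis HFclosed : forall k, ns_closed_set (F k).
Hypothesis Hr0 : 0 < r0.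
Hypothesis Hcover : forall y, ns_norm (ns_sub y x0) < r0 -> exists k, F k y.
Hypothesis Hthin : forall k x s, 0 < s -> ns_norm (ns_sub x x0) < r0 ->
  exists y, ns_norm (ns_sub y x) < s /\ ~ F k y.

(** A closed ball [(centre, radius)] inside the ball of radius [r0 / 2] around [x0]. *)
Definition in_half_ball (p : V * R) : Prop :=
  0 < snd p /\ ns_norm (ns_sub (fst p) x0) + snd p <= r0 / 2.

Definition shrinks_avoiding (k : nat) (p q : V * R) : Prop :=
  0 < snd q /\ ns_norm (ns_sub (fst q) (fst p)) + snd q <= snd p /\ snd q <= / (INR k + 1) /\
  forall z, ns_norm (ns_sub z (fst q)) <= snd q -> ~ F k z.

(** Since [F k] contains no ball, any ball in the half ball contains a
    smaller closed ball missing [F k]. *)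
Lemma shrinks_avoiding_exists k p : in_half_ball p -> exists q, shrinks_avoiding k p q.
Proof.
  destruct p as [x s]. intros [Hs Hx]. simpl in *.
  pose proof (ns_norm_ge0 (ns_sub x x0)).
  destruct (Hthin k x s Hs ltac:(lra)) as [y [Hy Hny]].
  destruct (closed_complement_open (F k) y (HFclosed k) Hny) as [d [Hd Hball]].
  pose (s' := Rmin (d / 2) (Rmin (s - ns_norm (ns_sub y x)) (/ (INR k + 1)))).
  assert (Hk : 0 < / (INR k + 1)) by (apply Rinv_0_lt_compat; pose proof (pos_INR k); lra).
  assert (H1 : s' <= d / 2) by apply Rmin_l.
  assert (H2 : s' <= s - ns_norm (ns_sub y x)) by (eapply Rle_trans; [apply Rmin_r|apply Rmin_l]).
  assert (H3 : s' <= / (INR k + 1)) by (eapply Rle_trans; [apply Rmin_r|apply Rmin_r]).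
  assert (H4 : 0 < s') by (unfold s'; repeat apply Rmin_glb_lt; lra).
  exists (y, s'). repeat split; simpl; auto; [lra|].
  intros z Hz. apply Hball. lra.
Qed.

Lemma nested_balls : exists b : nat -> V * R,
  b O = (x0, r0 / 2) /\ forall n, in_half_ball (b n) /\ shrinks_avoiding n (b n) (b (S n)).
Proof.
  pose (next := fun k p => epsilon (inhabits (x0, r0)) (shrinks_avoiding k p)).
  pose (b := fix b (n : nat) : V * R := match n with O => (x0, r0 / 2) | S k => next k (b k) end).
  exists b. split; auto.
  assert (Hnext : forall n, in_half_ball (b n) -> shrinks_avoiding n (b n) (b (S n))).
  { intros n Hn. apply (epsilon_spec (inhabits (x0, r0)) (shrinks_avoiding n (b n))).
    apply shrinks_avoiding_exists, Hn. }
  intros n. induction n as [|n [[Hs Hx] HQ]].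
  - assert (I0 : in_half_ball (b O)) by (unfold in_half_ball; simpl; rewrite norm_sub_self; lra).
    auto.
  - assert (I1 : in_half_ball (b (S n))).
    { destruct HQ as (Hq1 & Hq2 & _). split; auto.
      pose proof (norm_sub_triangle (fst (b (S n))) (fst (b n)) x0). lra. }
    auto.
Qed.

(** The centres converge (completeness) to a point of the initial ball
    lying in no [F k], contradicting the covering hypothesis. *)
Lemma baire_contradiction : False.
Proof.
  destruct nested_balls as (b & Hb0 & Hb).
  pose (xs := fun n => fst (b n)). pose (ss := fun n => snd (b n)).
  assert (Hnest : forall k n, (n >= k)%nat -> ns_norm (ns_sub (xs n) (xs k)) + ss n <= ss k).
  { intros k n Hn. induction Hn as [|n Hn IH].
    - unfold xs, ss. rewrite norm_sub_self. lra.
    - destruct (Hb n) as [_ (_ & Hq2 & _)].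
      pose proof (norm_sub_triangle (xs (S n)) (xs n) (xs k)). unfold xs, ss in *. lra. }
  assert (Hss : forall n, 0 < ss n /\ ss (S n) <= / (INR n + 1)).
  { intros n. destruct (Hb n) as [[Hi _] (_ & _ & Hq3 & _)]. split; auto. }
  destruct (HVcomplete xs) as [xlim Hxlim].
  { intros eps He. destruct (inv_succ_small (eps / 2) ltac:(lra)) as [N HN]. exists (S N).
    intros n m Hn Hm.
    pose proof (Hnest (S N) n Hn). pose proof (Hnest (S N) m Hm).
    pose proof (Hss n). pose proof (Hss m). destruct (Hss N) as [_ HsN].
    specialize (HN N ltac:(lia)).
    pose proof (norm_sub_triangle (xs n) (xs (S N)) (xs m)).
    rewrite (norm_sub_sym (xs (S N)) (xs m)) in *. lra. }
  assert (Hin : forall k, ns_norm (ns_sub xlim (xs k)) <= ss k).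
  { intros k. apply Rnot_lt_le. intros Hlt.
    set (g := ns_norm (ns_sub xlim (xs k)) - ss k).
    destruct (proj1 (norm_cv_iff xs xlim) Hxlim g ltac:(unfold g; lra)) as [N HN].
    specialize (HN (max N k) ltac:(lia)). pose proof (Hnest k (max N k) ltac:(lia)).
    pose proof (Hss (max N k)).
    pose proof (norm_sub_triangle xlim (xs (max N k)) (xs k)).
    rewrite (norm_sub_sym xlim (xs (max N k))) in *. unfold g in *. lra. }
  destruct (Hcover xlim) as [k Hk].
  { pose proof (Hin O). unfold xs, ss in *. rewrite Hb0 in *. simpl in *. lra. }
  destruct (Hb k) as [_ (_ & _ & _ & Hmiss)]. exact (Hmiss xlim (Hin (S k)) Hk).
Qed.

End Baire.

Theorem baire {V : NormedSpace} (F : nat -> V -> Prop) x0 r0 :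
  ns_complete V -> (forall k, ns_closed_set (F k)) -> 0 < r0 ->
  (forall y, ns_norm (ns_sub y x0) < r0 -> exists k, F k y) ->
  exists k x s, 0 < s /\ ns_norm (ns_sub x x0) < r0 /\
    forall y, ns_norm (ns_sub y x) < s -> F k y.
Proof.
  intros HVc HF Hr0 Hcov. apply NNPP. intros Hno.
  apply (baire_contradiction F x0 r0 HVc HF Hr0 Hcov).
  intros k x s Hs Hx. apply NNPP. intros Hn. apply Hno. exists k, x, s. repeat split; auto.
  intros y Hy. apply NNPP. intros Hk. apply Hn. eauto.
Qed.

(** Upper semicontinuity of a convex lsc function at interior points of its
    domain: Baire gives an upper bound near the point, and convexity turns
    a local upper bound into upper semicontinuity. *)

Section ConvexUsc.
Context {V : NormedSpace} (phi : V -> ERbar).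
Hypothesis Hconvex : convex_fun phi.

Lemma convex_usc_of_bounded v pv s Mb : phi v = Fin pv -> 0 < s ->
  (forall y, ns_norm (ns_sub y v) < s -> exists p, phi y = Fin p /\ p <= Mb) ->
  forall eps, 0 < eps ->
  exists d, 0 < d /\ forall y, ns_norm (ns_sub y v) < d -> exists p, phi y = Fin p /\ p <= pv + eps.
Proof.
  intros Hpv Hs Hloc eps Heps.
  pose (D := Rabs (Mb - pv) + 1).
  assert (HD : 0 < D) by (unfold D; pose proof (Rabs_pos (Mb - pv)); lra).
  pose (t := Rmin (1 / 2) (eps / D)).
  assert (Ht : 0 < t) by (unfold t; apply Rmin_glb_lt; [lra| apply Rdiv_lt_0_compat; lra]).
  assert (Ht1 : t <= 1 / 2) by apply Rmin_l.
  assert (Ht2 : t * (Mb - pv) <= eps).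
  { apply Rle_trans with (t * D).
    - apply Rmult_le_compat_l; [lra|]. unfold D. pose proof (Rle_abs (Mb - pv)). lra.
    - apply Rle_trans with (eps / D * D); [apply Rmult_le_compat_r; [lra| apply Rmin_r]|].
      right. field. lra. }
  exists (t * s). split; [apply Rmult_lt_0_compat; lra|].
  intros y Hy.
  (* y is the convex combination t y' + (1 - t) v with y' near v *)
  pose (y' := ns_add v (ns_scal (/ t) (ns_sub y v))).
  destruct (Hloc y') as [p' [Hp' Hp'b]].
  { unfold y'. replace (ns_sub (ns_add v (ns_scal (/ t) (ns_sub y v))) v)
      with (ns_scal (/ t) (ns_sub y v)) by vring.
    rewrite ns_normZ, Rabs_right by (left; apply Rinv_0_lt_compat; lra).
    apply Rmult_lt_reg_l with t; auto. rewrite <- Rmult_assoc, Rinv_r, Rmult_1_l by lra. exact Hy. }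
  pose proof (Hconvex y' v t ltac:(lra)) as Hc. rewrite Hp', Hpv in Hc.
  replace (ns_add (ns_scal t y') (ns_scal (1 - t) v)) with y in Hc
    by (unfold y'; vring_coefs; field; lra).
  destruct (phi y) as [p|]; simpl in Hc; [|contradiction]. exists p. split; auto.
  assert (t * p' <= t * Mb) by (apply Rmult_le_compat_l; lra). lra.
Qed.

Hypothesis Hlsc : lsc_fun phi.

Lemma convex_lsc_locally_bounded v r : ns_complete V -> 0 < r ->
  (forall y, ns_norm (ns_sub y v) < r -> phi y <> PInf) ->
  exists s Mb, 0 < s /\ forall y, ns_norm (ns_sub y v) < s -> exists p, phi y = Fin p /\ p <= Mb.
Proof.
  intros HVc Hr Hdom.
  pose (F := fun (k : nat) y => ERle (phi y) (Fin (INR k))).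
  destruct (baire F v r) as (k & x & s & Hs & Hx & Hball); auto.
  { intros k. exact (proj1 (sublevel_closed_convex phi (INR k) Hconvex Hlsc)). }
  { intros y Hy. destruct (finite_of phi y (Hdom y Hy)) as [p Hp].
    destruct (INR_archimed 1 p ltac:(lra)) as [k Hk]. exists k. unfold F. rewrite Hp. simpl. lra. }
  (* phi <= k on B(x, s); reflect through v: y is the midpoint of x + 2(y - v) and q = 2v - x *)
  pose (q := ns_add v (ns_sub v x)).
  destruct (finite_of phi q) as [pq Hpq].
  { apply Hdom. unfold q. replace (ns_sub (ns_add v (ns_sub v x)) v) with (ns_sub v x) by vring.
    rewrite norm_sub_sym. exact Hx. }
  exists (s / 2), ((INR k + pq) / 2). split; [lra|]. intros y Hy.
  pose (x' := ns_add x (ns_scal 2 (ns_sub y v))).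
  assert (Hx' : F k x').
  { apply Hball. unfold x'.
    replace (ns_sub (ns_add x (ns_scal 2 (ns_sub y v))) x) with (ns_scal 2 (ns_sub y v)) by vring.
    rewrite ns_normZ, Rabs_right by lra. lra. }
  unfold F in Hx'. destruct (phi x') as [b|] eqn:Eb; [|contradiction]. simpl in Hx'.
  pose proof (Hconvex x' q (1/2) ltac:(lra)) as Hc. rewrite Eb, Hpq in Hc.
  replace (ns_add (ns_scal (1 / 2) x') (ns_scal (1 - 1 / 2) q)) with y in Hc
    by (unfold x', q; vring_coefs; field).
  destruct (phi y) as [p|]; simpl in Hc; [|contradiction]. exists p. split; auto. lra.
Qed.

Lemma convex_lsc_usc v r pv : ns_complete V -> 0 < r ->
  (forall y, ns_norm (ns_sub y v) < r -> phi y <> PInf) -> phi v = Fin pv ->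
  forall eps, 0 < eps ->
  exists d, 0 < d /\ forall y, ns_norm (ns_sub y v) < d -> exists p, phi y = Fin p /\ p <= pv + eps.
Proof.
  intros HVc Hr Hdom Hpv.
  destruct (convex_lsc_locally_bounded v r HVc Hr Hdom) as (s & Mb & Hs & Hloc).
  exact (convex_usc_of_bounded v pv s Mb Hpv Hs Hloc).
Qed.

End ConvexUsc.

Section Selection.
Context {V B : NormedSpace} (C : V -> Prop) (T : B -> V -> V -> R) (phi : V -> ERbar)
  (K : V -> V -> Prop) (m : V -> R) (a : B).
Hypothesis HTdual : forall u, in_dual (T a u).
Hypothesis Hm : in_dual m.
Hypothesis HKC : forall w y, C w -> K w y -> C y.

Lemma selection_range_bounded (A : B -> Prop) :
  A a -> H_0 A T phi C K -> ns_bounded_set (fun u => exists w, C w /\ S_a T phi K m a w u).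
Proof.
  intros Ha (C0 & h & [R0 HR0] & HC0 & Hh & Hcoer).
  destruct (dual_bound_pos m Hm) as [Mm [HMm HmB]].
  destruct (Hh (Mm + 1)) as [t0 Ht0].
  exists (Rmax t0 (Mm * R0)). intros u [w [Cw [Kwu [pu [Hpu Hvi]]]]].
  destruct (HC0 w Cw) as [v0 [Kv0 C0v0]].
  destruct (Hcoer v0 a u C0v0 Ha (HKC w u Cw Kwu)) as [pw [pv [Hpw [Hpv Hc]]]].
  rewrite Hpu in Hpw. injection Hpw as <-.
  specialize (Hvi v0 Kv0). rewrite Hpv in Hvi.
  (* testing the inequality at v0 gives  h(|u|) |u| <= Mm (|u| + R0) *)
  rewrite !lin_sub in Hc, Hvi by apply HTdual. rewrite lin_sub in Hvi by apply Hm.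
  pose proof (Rabs_le_bounds _ _ (HmB u)). pose proof (Rabs_le_bounds _ _ (HmB v0)).
  pose proof (HR0 v0 C0v0). pose proof (ns_norm_ge0 u). pose proof (ns_norm_ge0 v0).
  assert (Mm * ns_norm v0 <= Mm * R0) by (apply Rmult_le_compat_l; lra).
  destruct (Rlt_or_le (ns_norm u) t0) as [Hl|Hl].
  - apply Rle_trans with t0; [lra | apply Rmax_l].
  - specialize (Ht0 (ns_norm u) (Rle_ge _ _ Hl)).
    assert ((Mm + 1) * ns_norm u <= h (ns_norm u) * ns_norm u) by (apply Rmult_le_compat_r; lra).
    apply Rle_trans with (Mm * R0); [nra | apply Rmax_r].
Qed.

Hypothesis HTmono : forall u v, T a u (ns_sub u v) - T a v (ns_sub u v) >= 0.
Hypothesis HTcont : forall (un : nat -> V) u, norm_cv un u -> dual_cv (fun n => T a (un n)) (T a u).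
Hypothesis Hint : in_int_dom phi C.

Lemma phi_finite_on_C y : C y -> exists p, phi y = Fin p.
Proof.
  intros Cy. destruct (Hint y Cy) as [r [Hr Hd]]. apply finite_of, Hd.
  rewrite norm_sub_self. exact Hr.
Qed.

(** By monotonicity, a solution [u] of the variational inequality at [w] is
    below the Minty expression at every [v] in [K(w)]. *)
Lemma selection_upper_bound w u v pu pv : S_a T phi K m a w u -> phi u = Fin pu ->
  K w v -> phi v = Fin pv -> pu <= T a v (ns_sub v u) + pv - m (ns_sub v u).
Proof.
  intros [_ [pu' [Hpu' Hvi]]] Hpu Kv Hpv. rewrite Hpu in Hpu'. injection Hpu' as <-.
  specialize (Hvi v Kv). rewrite Hpv in Hvi.
  pose proof (HTmono v u). lra.
Qed.

Hypothesis HVcomplete : ns_complete V.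
Hypothesis Hconvex : convex_fun phi.
Hypothesis Hlsc : lsc_fun phi.
Hypothesis HKrecovery : forall (xn : nat -> V) x y, (forall n, C (xn n)) -> weak_cv xn x -> K x y ->
  exists yn : nat -> V, (forall n, C (yn n)) /\ (forall n, K (xn n) (yn n)) /\ norm_cv yn y.

Lemma limit_minty (wn un : nat -> V) w u pu Mb :
  (forall n, C (wn n)) -> (forall n, C (un n)) -> (forall n, ns_norm (un n) <= Mb) ->
  (forall n, S_a T phi K m a (wn n) (un n)) -> weak_cv wn w -> weak_cv un u ->
  C w -> phi u = Fin pu ->
  forall v pv, K w v -> phi v = Fin pv -> T a v (ns_sub v u) + pv - pu >= m (ns_sub v u).
Proof.
  intros HCw HCu Hun HS Hw Hu Cw Hpu v pv Kv Hpv. apply Rnot_lt_ge. intros Hlt.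
  set (dl := m (ns_sub v u) - (T a v (ns_sub v u) + pv - pu)).
  destruct (HKrecovery wn w v HCw Hw Kv) as (vn & HCvn & HKvn & Hvn).
  destruct (Hint v (HKC w v Cw Kv)) as [r [Hr Hdom]].
  destruct (convex_lsc_usc phi Hconvex Hlsc v r pv HVcomplete Hr Hdom Hpv (dl / 4) ltac:(unfold dl; lra))
    as [d [Hd Husc]].
  destruct (proj1 (norm_cv_iff vn v) Hvn (Rmin d 1) ltac:(apply Rmin_glb_lt; lra)) as [N1 HN1].
  assert (Hcv : Un_cv (fun n => T a (vn n) (ns_sub (vn n) (un n)) - m (ns_sub (vn n) (un n)))
                      (T a v (ns_sub v u) - m (ns_sub v u))).
  { assert (Hw' : weak_cv (fun n => ns_sub (vn n) (un n)) (ns_sub v u))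
      by (apply weak_cv_sub; auto; apply norm_cv_weak_cv, Hvn).
    apply CV_minus; [|apply Hw', Hm].
    apply (pairing_cv (fun n => T a (vn n)) (T a v) _ _ (ns_norm v + 1 + Mb) N1); auto.
    intros n Hn. specialize (HN1 n Hn). pose proof (Rmin_r d 1).
    pose proof (norm_sub_le (vn n) (un n)). pose proof (norm_le_sub (vn n) v). pose proof (Hun n).
    lra. }
  destruct (Hcv (dl / 4) ltac:(unfold dl; lra)) as [N2 HN2].
  (* hence phi (un n) <= pu - dl / 2 eventually, contradicting weak lsc at u *)
  assert (Hev : forall n, (n >= max N1 N2)%nat -> ERle (phi (un n)) (Fin (pu - dl / 2))).
  { intros n Hn.
    specialize (HN1 n ltac:(lia)). specialize (HN2 n ltac:(lia)). unfold R_dist in HN2.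
    apply Rabs_def2 in HN2.
    destruct (Husc (vn n) ltac:(pose proof (Rmin_l d 1); lra)) as [q [Hq Hqb]].
    destruct (phi_finite_on_C (un n) (HCu n)) as [pn Hpn].
    pose proof (selection_upper_bound _ _ _ _ _ (HS n) Hpn (HKvn n) Hq).
    rewrite Hpn. simpl. unfold dl in *. lra. }
  pose proof (convex_lsc_weakly_lsc phi un u _ _ Hconvex Hlsc Hu Hev) as Hl.
  rewrite Hpu in Hl. simpl in Hl. unfold dl in *. lra.
Qed.

(** The Minty inequality at the point [t v + (1 - t) u] of the segment
    yields, after dividing by [t], the inequality with [T(a, .)] frozen there. *)
Lemma minty_on_segment u v pu pv t q :
  phi u = Fin pu -> phi v = Fin pv -> 0 < t < 1 ->
  phi (ns_add (ns_scal t v) (ns_scal (1 - t) u)) = Fin q ->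
  T a (ns_add (ns_scal t v) (ns_scal (1 - t) u))
      (ns_sub (ns_add (ns_scal t v) (ns_scal (1 - t) u)) u) + q - pu >=
    m (ns_sub (ns_add (ns_scal t v) (ns_scal (1 - t) u)) u) ->
  T a (ns_add (ns_scal t v) (ns_scal (1 - t) u)) (ns_sub v u) + pv - pu >= m (ns_sub v u).
Proof.
  intros Hpu Hpv Ht Hq Hminty.
  pose proof (Hconvex v u t Ht) as Hc. rewrite Hpv, Hpu, Hq in Hc. simpl in Hc.
  set (vt := ns_add (ns_scal t v) (ns_scal (1 - t) u)) in *.
  replace (ns_sub vt u) with (ns_scal t (ns_sub v u)) in Hminty by (unfold vt; vring).
  rewrite (lin_scal (T a vt)), (lin_scal m) in Hminty by (apply HTdual || apply Hm).
  assert (t * (T a vt (ns_sub v u) + pv - pu - m (ns_sub v u)) >= 0) by nra.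
  destruct (Rge_gt_dec (T a vt (ns_sub v u) + pv - pu - m (ns_sub v u)) 0); [lra|nra].
Qed.

Lemma minty_implies_selection w u pu : C w -> K w u -> ns_convex_set (K w) -> phi u = Fin pu ->
  (forall v pv, K w v -> phi v = Fin pv -> T a v (ns_sub v u) + pv - pu >= m (ns_sub v u)) ->
  S_a T phi K m a w u.
Proof.
  intros Cw Ku Kconvex Hpu Hminty. split; auto. exists pu. split; auto.
  intros v Kv. destruct (phi_finite_on_C v (HKC w v Cw Kv)) as [pv Hpv]. rewrite Hpv.
  apply Rnot_lt_ge. intros Hlt.
  set (gap := m (ns_sub v u) - (T a u (ns_sub v u) + pv - pu)).
  pose (vt := fun n : nat => ns_add (ns_scal (/ (INR n + 2)) v) (ns_scal (1 - / (INR n + 2)) u)).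
  assert (Htn : forall n, 0 < / (INR n + 2) < 1).
  { intros n. pose proof (pos_INR n). split; [apply Rinv_0_lt_compat; lra|].
    rewrite <- Rinv_1. apply Rinv_lt_contravar; lra. }
  pose proof (ns_norm_ge0 (ns_sub v u)) as Hn0.
  assert (Hvt : norm_cv vt u).
  { apply norm_cv_iff. intros eps He.
    destruct (inv_succ_small (eps / (ns_norm (ns_sub v u) + 1))) as [N HN];
      [apply Rdiv_lt_0_compat; lra|].
    exists N. intros n Hn. specialize (HN n Hn).
    replace (ns_sub (vt n) u) with (ns_scal (/ (INR n + 2)) (ns_sub v u)) by (unfold vt; vring).
    rewrite ns_normZ, Rabs_right by (left; apply Htn).
    assert (/ (INR n + 2) <= / (INR n + 1)) by (apply Rinv_le_contravar; pose proof (pos_INR n); lra).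
    apply Rle_lt_trans with (eps / (ns_norm (ns_sub v u) + 1) * ns_norm (ns_sub v u));
      [apply Rmult_le_compat_r; lra|].
    apply Rlt_le_trans with (eps / (ns_norm (ns_sub v u) + 1) * (ns_norm (ns_sub v u) + 1));
      [apply Rmult_lt_compat_l; [apply Rdiv_lt_0_compat|]; lra|].
    right. field. lra. }
  destruct (HTcont vt u Hvt (gap / (2 * (ns_norm (ns_sub v u) + 1))))
    as [N HN]; [apply Rdiv_lt_0_compat; unfold gap; lra|].
  assert (Kvt : K w (vt N)) by (apply Kconvex; auto; pose proof (Htn N); lra).
  destruct (phi_finite_on_C (vt N) (HKC w _ Cw Kvt)) as [q Hq].
  pose proof (minty_on_segment u v pu pv _ q Hpu Hpv (Htn N) Hq (Hminty _ q Kvt Hq)) as Hseg.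
  fold (vt N) in Hseg.
  pose proof (dual_bound_le _ _ (ns_norm (ns_sub v u) + 1) (ns_sub v u) (HN N (le_n N))
    ltac:(left; apply Rdiv_lt_0_compat; unfold gap; lra) ltac:(lra)) as Hb.
  replace (gap / (2 * (ns_norm (ns_sub v u) + 1)) * (ns_norm (ns_sub v u) + 1)) with (gap / 2)
    in Hb by (field; lra).
  apply Rabs_le_bounds in Hb. unfold gap in *. lra.
Qed.

End Selection.

Theorem mainTheorem3
  (V B : NormedSpace) (HVc : ns_complete V) (HVr : ns_reflexive V) (HBc : ns_complete B)
  (C : V -> Prop) (HCne : exists x, C x) (HCcl : ns_closed_set C) (HCcv : ns_convex_set C)
  (A : B -> Prop) (HAne : exists a, A a)
  (T : B -> V -> V -> R) (phi : V -> ERbar) (K : V -> V -> Prop) (m : V -> R)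
  (HT : H_T A T) (Hphi : H_phi phi C) (HK : H_K C K) (H0 : H_0 A T phi C K)
  (Hm : in_dual m) (a : B) (Ha : A a) :
  (forall (wn un : nat -> V) (w u : V),
     (forall n, C (wn n)) -> (forall n, C (un n)) ->
     (forall n, S_a T phi K m a (wn n) (un n)) ->
     weak_cv wn w -> weak_cv un u ->
     S_a T phi K m a w u) /\
  ns_bounded_set (fun u => exists w, C w /\ S_a T phi K m a w u).
Proof.
  destruct HT as (HTdual & _ & _ & _ & HTmono & HTcont).
  destruct Hphi as (_ & Hconvex & Hlsc & Hint).
  destruct HK as (HKsets & HKrecovery & HKclosed).
  assert (HKC : forall w y, C w -> K w y -> C y) by (intros w y Cw; apply (HKsets w Cw)).
  pose proof (selection_range_bounded C T phi K m a (HTdual a) Hm HKC A Ha H0) as Hbounded.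
  split; [|exact Hbounded].
  intros wn un w u HCw HCu HS Hw Hu.
  destruct Hbounded as [Mb HMb].
  assert (Hun : forall n, ns_norm (un n) <= Mb) by (intros n; apply HMb; exists (wn n); auto).
  assert (Cw : C w) by exact (closed_convex_weakly_closed C wn w O HCcl HCcv (fun n _ => HCw n) Hw).
  assert (Kwu : K w u) by exact (HKclosed wn un w u HCw HCu (fun n => proj1 (HS n)) Hw Hu).
  destruct (phi_finite_on_C C phi Hint u (HKC w u Cw Kwu)) as [pu Hpu].
  apply (minty_implies_selection C T phi K m a (HTdual a) Hm HKC (HTcont a Ha) Hint Hconvex w u pu);
    auto; [apply (HKsets w Cw)|].
  apply (limit_minty C T phi K m a (HTdual a) Hm HKC (HTmono a Ha) (HTcont a Ha) Hint HVc
           Hconvex Hlsc HKrecovery wn un w u pu Mb); auto.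
Qed.
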